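(* Let ${\rm PSL}_2(\mathbb Z)$ be presented by generators $\rho,\sigma$ with relations $\rho^3=1$, $\sigma^2=1$. Then ${\rm PSL}_2(\mathbb Z)$ acts on $\Delta$ as a group of automorphisms such that $\rho$ sends $A\mapsto B$, $B\mapsto C$, $C\mapsto A$, $\alpha\mapsto\beta$, $\beta\mapsto\gamma$, $\gamma\mapsto\alpha$, and $\sigma$ sends $A\mapsto B$, $B\mapsto A$, $C\mapsto C+\frac{AB-BA}{q-q^{-1}}$, $\alpha\mapsto\beta$, $\beta\mapsto\alpha$, $\gamma\mapsto\gamma$.
   Context: Let $\mathbb F$ be a field and fix a nonzero $q\in\mathbb F$ with $q^4\neq 1$. Algebras are associative with 1. The universal Askey--Wilson algebra $\Delta$ is the $\mathbb F$-algebra with generators $A,B,C$ subject to the relations that each of $A+\frac{qBC-q^{-1}CB}{q^2-q^{-2}}$, $B+\frac{qCA-q^{-1}AC}{q^2-q^{-2}}$, $C+\frac{qAB-q^{-1}BA}{q^2-q^{-2}}$ is central in $\Delta$. Let $\alpha,\beta,\gamma$ denote these three central elements (in this order) each multiplied by $q+q^{-1}$. *)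

From HB Require Import structures.
From mathcomp Require Import all_boot all_order all_algebra.
Set Implicit Arguments. Unset Strict Implicit. Unset Printing Implicit Defensive.
Import Order.TTheory GRing.Theory Num.Theory.
Local Open Scope ring_scope.

Section AW.
Variables (F : fieldType) (q : F).

Definition aw_elt (R : algType F) (x y z : R) : R :=
  x + (q ^+ 2 - q^-2)^-1 *: (q *: (y * z) - q^-1 *: (z * y)).

Definition aw_alpha (R : algType F) (a b c : R) : R := (q + q^-1) *: aw_elt a b c.
Definition aw_beta  (R : algType F) (a b c : R) : R := (q + q^-1) *: aw_elt b c a.
Definition aw_gamma (R : algType F) (a b c : R) : R := (q + q^-1) *: aw_elt c a b.

Definition commutes_with_gens (R : algType F) (a b c x : R) : Prop :=
  x * a = a * x /\ x * b = b * x /\ x * c = c * x.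

Definition aw_relations (R : algType F) (a b c : R) : Prop :=
  commutes_with_gens a b c (aw_elt a b c) /\
  commutes_with_gens a b c (aw_elt b c a) /\
  commutes_with_gens a b c (aw_elt c a b).

(* (D, A, B, C) is the universal Askey-Wilson algebra: the F-algebra
   presented by generators A, B, C and the relations above, characterized
   by its universal property. *)
Definition is_universal_AW (D : algType F) (A B C : D) : Prop :=
  aw_relations A B C /\
  forall (R : algType F) (a b c : R), aw_relations a b c ->
    exists f : {lrmorphism D -> R},
      [/\ f A = a, f B = b, f C = c &
        forall g : {lrmorphism D -> R},
          g A = a -> g B = b -> g C = c -> forall x, g x = f x].
End AW.

From HB Require Import structures.
From mathcomp Require Import all_boot all_order all_algebra.
From mathcomp Require Import ring.
Import GRing.Theory.
Set Implicit Arguments. Unset Strict Implicit.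
Local Open Scope ring_scope.

(* Write [x, y] = xy - yx and <x, y> = q xy - q^-1 yx, so that the three central
   elements are x + <y, z> / (q^2 - q^-2) for (x, y, z) a cyclic shift of (A, B, C).
   The images of A, B, C under rho and sigma again satisfy the defining relations,
   so the universal property yields both endomorphisms, and its uniqueness clause
   gives rho^3 = 1 and sigma^2 = 1.  For rho the relations are only permuted.  For
   sigma, put C' = C + [A, B] / (q - q^-1); the identities
   <x, y> - <y, x> = (q + q^-1) [x, y],  <[x, y], y> = [<x, y>, y]  and
   <x, [x, y]> = [x, <x, y>], together with the centrality of gamma, show that the
   central elements built from (B, A, C') are exactly beta, alpha and gamma. *)

Section Brackets.
Variables (F : fieldType) (q : F) (R : algType F).
Implicit Types (x y z : R) (k : F).

Definition commutator x y := x * y - y * x.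
Definition qbracket x y := q *: (x * y) - q^-1 *: (y * x).

Lemma aw_eltE x y z : aw_elt q x y z = x + (q ^+ 2 - q^-2)^-1 *: qbracket y z.
Proof. by []. Qed.

Lemma commutatorN x y : commutator x y = - commutator y x.
Proof. by rewrite /commutator opprB. Qed.

Lemma commutatorDl x y z : commutator (x + y) z = commutator x z + commutator y z.
Proof. by rewrite /commutator mulrDl mulrDr opprD addrACA. Qed.

Lemma commutatorZl k x y : commutator (k *: x) y = k *: commutator x y.
Proof. by rewrite /commutator scalerBr scalerAl scalerAr. Qed.

Lemma commutator_eq0 x y : (commutator x y == 0) = (x * y == y * x).
Proof. exact: subr_eq0. Qed.

Lemma qbracketDl x y z : qbracket (x + y) z = qbracket x z + qbracket y z.
Proof. by rewrite /qbracket mulrDl mulrDr !scalerDr opprD addrACA. Qed.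

Lemma qbracketZl k x y : qbracket (k *: x) y = k *: qbracket x y.
Proof. by rewrite /qbracket -scalerAl -scalerAr scalerBr !scalerA (mulrC q) (mulrC q^-1). Qed.

Lemma qbracketDr x y z : qbracket x (y + z) = qbracket x y + qbracket x z.
Proof. by rewrite /qbracket mulrDl mulrDr !scalerDr opprD addrACA. Qed.

Lemma qbracketZr k x y : qbracket x (k *: y) = k *: qbracket x y.
Proof. by rewrite /qbracket -scalerAl -scalerAr scalerBr !scalerA (mulrC q) (mulrC q^-1). Qed.

Lemma qbracket_sub_swap x y :
  qbracket x y - qbracket y x = (q + q^-1) *: commutator x y.
Proof.
rewrite /qbracket /commutator opprB scalerDl !scalerBr.
by rewrite addrACA [- _ + _]addrC addrACA.
Qed.

Lemma qbracket_commutatorl x y :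
  qbracket (commutator x y) y = commutator (qbracket x y) y.
Proof.
rewrite /qbracket /commutator mulrBl mulrBr !scalerBr mulrBl mulrBr.
rewrite -!scalerAl -!scalerAr !mulrA.
by rewrite !opprB addrACA [RHS]addrACA (addrC (- (q^-1 *: _))).
Qed.

Lemma qbracket_commutatorr x y :
  qbracket x (commutator x y) = commutator x (qbracket x y).
Proof.
rewrite /qbracket /commutator mulrBl mulrBr !scalerBr mulrBl mulrBr.
rewrite -!scalerAl -!scalerAr !mulrA.
by rewrite !opprB addrACA [RHS]addrACA (addrC (- (q^-1 *: _))).
Qed.
End Brackets.

Lemma commrZ (F : fieldType) (R : algType F) (k : F) (x y : R) :
  GRing.comm x y -> GRing.comm x (k *: y).
Proof. by rewrite /GRing.comm -scalerAl -scalerAr => ->. Qed.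

Lemma qsum_neq0 (F : fieldType) (q : F) : q != 0 -> q ^+ 4 != 1 -> q + q^-1 != 0.
Proof.
move=> q0; apply: contra => /eqP qsum0; rewrite -subr_eq0.
have -> : q ^+ 4 - 1 = (q + q^-1) * (q ^+ 3 - q) by field.
by rewrite qsum0 mul0r.
Qed.

Section SigmaImage.
Variables (F : fieldType) (q : F) (R : algType F).
Hypothesis qsum : q + q^-1 != 0.
Implicit Types (a b c x : R).

Definition aw_sigmaC a b c := c + (q - q^-1)^-1 *: commutator a b.

Lemma scale_qdiff_inv (v : R) :
  (q - q^-1)^-1 *: v = (q + q^-1) *: ((q ^+ 2 - q^-2)^-1 *: v).
Proof.
have -> : q ^+ 2 - q^-2 = (q - q^-1) * (q + q^-1) by rewrite -exprVn; ring.
by rewrite scalerA invfM mulrCA mulfV ?mulr1.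
Qed.

Lemma aw_sigmaCK a b c : aw_sigmaC b a (aw_sigmaC a b c) = c.
Proof. by rewrite /aw_sigmaC (commutatorN b) scalerN addrK. Qed.

Lemma aw_elt_sigmaC_gamma a b c :
  aw_elt q (aw_sigmaC a b c) b a = aw_elt q c a b.
Proof.
rewrite !aw_eltE /aw_sigmaC -addrA; congr (_ + _).
rewrite scale_qdiff_inv scalerA mulrC -scalerA -scalerDr.
by rewrite -qbracket_sub_swap subrK.
Qed.

Lemma aw_elt_sigmaC_alpha a b c : GRing.comm (aw_elt q c a b) b ->
  aw_elt q a (aw_sigmaC a b c) b = aw_elt q a b c.
Proof.
move/eqP; rewrite -commutator_eq0 aw_eltE commutatorDl commutatorZl addrC addr_eq0.
move=> /eqP gammaB; rewrite !aw_eltE /aw_sigmaC; congr (_ + _ *: _).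
rewrite qbracketDl qbracketZl qbracket_commutatorl scale_qdiff_inv gammaB.
by rewrite scalerN -qbracket_sub_swap opprB addrC subrK.
Qed.

Lemma aw_elt_sigmaC_beta a b c : GRing.comm (aw_elt q c a b) a ->
  aw_elt q b a (aw_sigmaC a b c) = aw_elt q b c a.
Proof.
move/eqP; rewrite -commutator_eq0 aw_eltE commutatorDl commutatorZl addrC addr_eq0.
rewrite -commutatorN => /eqP gammaA; rewrite !aw_eltE /aw_sigmaC; congr (_ + _ *: _).
rewrite qbracketDr qbracketZr qbracket_commutatorr commutatorN scalerN.
by rewrite scale_qdiff_inv gammaA -qbracket_sub_swap opprB addrC subrK.
Qed.

Lemma commutes_with_gens_sigmaC a b c x : commutes_with_gens a b c x ->
  commutes_with_gens b a (aw_sigmaC a b c) x.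
Proof.
case=> xa [xb xc]; do !split=> //.
by apply: commrD => //; apply/commrZ/commrD; [apply: commrM | apply/commrN/commrM].
Qed.

Lemma aw_relations_sigmaC a b c :
  aw_relations q a b c -> aw_relations q b a (aw_sigmaC a b c).
Proof.
case=> alpha_gens [beta_gens gamma_gens]; have [gammaA [gammaB _]] := gamma_gens.
rewrite /aw_relations aw_elt_sigmaC_beta // aw_elt_sigmaC_alpha // aw_elt_sigmaC_gamma.
by split; [|split]; apply: commutes_with_gens_sigmaC.
Qed.

End SigmaImage.

Lemma aw_relations_rot (F : fieldType) (q : F) (R : algType F) (a b c : R) :
  aw_relations q a b c -> aw_relations q b c a.
Proof. by case=> [[? [? ?]] [[? [? ?]] [? [? ?]]]]; do !split. Qed.

Section Morphisms.
Variables (F : fieldType) (q : F) (R S : algType F) (f : {lrmorphism R -> S}).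

Lemma lrmorphism_aw_elt x y z : f (aw_elt q x y z) = aw_elt q (f x) (f y) (f z).
Proof. by rewrite /aw_elt linearD linearZ linearB !linearZ /= !rmorphM. Qed.

Lemma lrmorphism_aw_sigmaC a b c :
  f (aw_sigmaC q a b c) = aw_sigmaC q (f a) (f b) (f c).
Proof. by rewrite /aw_sigmaC /commutator linearD linearZ linearB /= !rmorphM. Qed.

End Morphisms.

Lemma universal_AW_endo_id (F : fieldType) (q : F) (D : algType F) (A B C : D) :
  is_universal_AW q A B C -> forall g : {lrmorphism D -> D},
  g A = A -> g B = B -> g C = C -> forall x, g x = x.
Proof.
case=> rel univ g gA gB gC x; have [f [_ _ _ f_uniq]] := univ D A B C rel.
by rewrite (f_uniq g) // -(f_uniq idfun).
Qed.

Theorem theorem3p1 (F : fieldType) (q : F) (hq0 : q != 0) (hq4 : q ^+ 4 != 1)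
    (D : algType F) (A B C : D) (hD : is_universal_AW q A B C) :
  exists rho sigma : {lrmorphism D -> D},
    [/\ bijective rho, bijective sigma,
        (forall x, rho (rho (rho x)) = x) &
        (forall x, sigma (sigma x) = x)] /\
    [/\ rho A = B, rho B = C & rho C = A] /\
    [/\ rho (aw_alpha q A B C) = aw_beta q A B C,
        rho (aw_beta q A B C) = aw_gamma q A B C &
        rho (aw_gamma q A B C) = aw_alpha q A B C] /\
    [/\ sigma A = B, sigma B = A &
        sigma C = C + (q - q^-1)^-1 *: (A * B - B * A)] /\
    [/\ sigma (aw_alpha q A B C) = aw_beta q A B C,
        sigma (aw_beta q A B C) = aw_alpha q A B C &
        sigma (aw_gamma q A B C) = aw_gamma q A B C].
Proof.
have qsum := qsum_neq0 hq0 hq4.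
have [rel univ] := hD; have [_ [_ [gammaA [gammaB _]]]] := rel.
have [rho [rhoA rhoB rhoC _]] := univ D B C A (aw_relations_rot rel).
have [sigma [sigmaA sigmaB sigmaC _]] :=
  univ D B A (aw_sigmaC q A B C) (aw_relations_sigmaC qsum rel).
have rho3 : forall x, rho (rho (rho x)) = x.
  apply: (universal_AW_endo_id hD (g := rho \o rho \o rho));
  by rewrite /= !(rhoA, rhoB, rhoC).
have sigma2 : forall x, sigma (sigma x) = x.
  apply: (universal_AW_endo_id hD (g := sigma \o sigma)); rewrite /= ?sigmaA ?sigmaB //.
  by rewrite sigmaC lrmorphism_aw_sigmaC sigmaA sigmaB sigmaC aw_sigmaCK.
exists rho, sigma; split.
  by split=> //; [exists (rho \o rho) | exists sigma].
rewrite /aw_alpha /aw_beta /aw_gamma !linearZ /= !lrmorphism_aw_elt.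
rewrite rhoA rhoB rhoC sigmaA sigmaB sigmaC.
by rewrite aw_elt_sigmaC_alpha // aw_elt_sigmaC_beta // aw_elt_sigmaC_gamma.
Qed.
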